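(* Let $\kappa\in\mathcal{L}$, let $\lambda_1>0$, $\lambda_2>0$ with $(\lambda_1,\lambda_2)\in\mathcal{R}_2$, and let $u\ge0$. Let $X_1,\dots,X_n$ be i.i.d. samples from $\kappa$ with empirical distribution $\hat\kappa(n)$, and \[ L(\boldsymbol\lambda,m(\kappa),\hat\kappa(n))=\frac1n\sum_{i=1}^n\log\Big(1-(X_i-m(\kappa))\lambda_1-(B-f(|X_i|))\lambda_2\Big). \] Then $\mathbb{P}\big(L(\boldsymbol\lambda,m(\kappa),\hat\kappa(n))\ge u\big)\le e^{-nu}$.
   Context: $\mathcal{P}(\mathbb{R})$: probability distributions on $\mathbb{R}$ with finite mean; $m(\kappa)$: mean. Fix a strictly increasing, continuous, non-negative, convex $f:[0,\infty)\to[0,\infty)$ with $f(y)/y\to\infty$, and $B>0$; $\mathcal{L}=\{\eta\in\mathcal{P}(\mathbb{R}):\mathbb{E}_\eta f(|X|)\le B\}$. $\mathcal{R}_2=\{(\lambda_1,\lambda_2):\lambda_1\ge0,\lambda_2\ge0,\ 1-(y-m(\kappa))\lambda_1-(B-f(|y|))\lambda_2\ge0\ \forall y\in\mathbb{R}\}$ (with $\log 0=-\infty$). *)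

From HB Require Import structures.
From mathcomp Require Import all_boot all_order all_algebra.
From mathcomp Require Import all_classical all_reals all_analysis.
Set Implicit Arguments. Unset Strict Implicit. Unset Printing Implicit Defensive.
Import Order.TTheory GRing.Theory Num.Theory.
Import numFieldNormedType.Exports.
Local Open Scope classical_set_scope.
Local Open Scope ring_scope.

(* Standing assumptions on f : [0,oo) -> [0,oo) (f given as a function R -> R,
   only its values on [0,oo) matter). *)
Definition admissible_f (R : realType) (f : R -> R) : Prop :=
  [/\ (forall x y, 0 <= x -> x < y -> f x < f y),
      {within `[0, +oo[, continuous f},
      (forall x, 0 <= x -> 0 <= f x),
      (forall x y (t : R), 0 <= x -> 0 <= y -> 0 <= t -> t <= 1 ->
          f (t * x + (1 - t) * y) <= t * f x + (1 - t) * f y)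
    & (fun y => f y / y) @ +oo --> +oo].

Definition finite_mean (R : realType) (k : probability R R) : Prop :=
  k.-integrable setT (fun x => x%:E).

Definition mean (R : realType) (k : probability R R) : R :=
  fine (\int[k]_x x%:E)%E.

Definition in_L (R : realType) (f : R -> R) (B : R) (k : probability R R) : Prop :=
  finite_mean k /\ (\int[k]_x (f `|x|)%:E <= B%:E)%E.

Definition in_R2 (R : realType) (f : R -> R) (B : R) (k : probability R R)
    (l1 l2 : R) : Prop :=
  [/\ 0 <= l1, 0 <= l2 &
      forall y : R, 0 <= 1 - (y - mean k) * l1 - (B - f `|y|) * l2].

Definition iid_with_law (R : realType) d (T : measurableType d)
    (P : probability T R) (n : nat) (X : 'I_n -> T -> R)
    (k : probability R R) : Prop :=
  [/\ (forall i, measurable_fun setT (X i)),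
      (forall i (A : set R), measurable A -> P (X i @^-1` A) = k A) &
      (forall A : 'I_n -> set R, (forall i, measurable (A i)) ->
         P (\bigcap_(i in [set: 'I_n]) (X i @^-1` A i)) =
         (\prod_(i < n) P (X i @^-1` A i))%E)].

(* L(lambda, m, hat kappa(n)) evaluated at the sample X(w); log 0 = -oo *)
Definition Lemp (R : realType) (f : R -> R) (B l1 l2 m : R) (n : nat)
    (x : 'I_n -> R) : \bar R :=
  ((n%:R^-1)%:E *
   \sum_(i < n) lne (1 - (x i - m) * l1 - (B - f `|x i|) * l2)%:E)%E.

(* Write g y = 1 - (y - m(kappa)) l1 - (B - f |y|) l2, which is nonnegative
   because (l1, l2) is in R_2.  As the mean of kappa is m(kappa) and
   E f(|X|) <= B, the kappa-integral of g is 1 - l2 (B - E f(|X|)) <= 1.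
   The event {L >= u} is {prod_i g(X_i) >= e^(n u)}; by independence
   E prod_i g(X_i) <= prod_i E g(X_i) <= 1, and Markov's inequality gives
   the bound e^(-n u).  Independence is only assumed for events: it is
   extended to nonnegative measurable functions one factor at a time, through
   simple functions and monotone convergence. *)

From HB Require Import structures.
From mathcomp Require Import all_boot all_order all_algebra.
From mathcomp Require Import all_classical all_reals all_analysis.
From mathcomp Require Import measurable_realfun ring lra.
Set Implicit Arguments. Unset Strict Implicit. Unset Printing Implicit Defensive.
Import Order.TTheory GRing.Theory Num.Theory.
Import numFieldNormedType.Exports.
Local Open Scope classical_set_scope.
Local Open Scope ring_scope.

Section integral_comp_weighted.
Local Open Scope ereal_scope.
Context d (T : measurableType d) d' (U : measurableType d') (R : realType).
Implicit Types (mu : {measure set T -> \bar R}) (Y : T -> U) (rho : T -> R).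

Import HBNNSimple.

Lemma integral_nnsfun_comp_weighted mu (s : {nnsfun U >-> R}) Y rho :
  measurable_fun setT Y -> measurable_fun setT rho -> (forall w, 0 <= rho w)%R ->
  \int[mu]_w (s (Y w) * rho w)%:E =
  \sum_(y \in range s) y%:E * \int[mu]_w (\1_(s @^-1` [set y]) (Y w) * rho w)%:E.
Proof.
move=> mY mrho rho0.
have mindic y : measurable_fun setT (fun w => \1_(s @^-1` [set y]) (Y w) : R).
  by apply: measurableT_comp => //; exact: measurable_indic.
under eq_integral => w _ do rewrite fimfunE mulr_fsuml -fsumEFin //.
rewrite ge0_integral_fsum //; last 2 first.
- by move=> y; apply/measurable_EFinP; do 2 apply: measurable_funM => //.
- by move=> y w _; rewrite !EFinM mule_ge0 ?lee_fin //; exact: nnfun_muleindic_ge0.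
apply: eq_fsbigr => _ /set_mem[u _ <-]; rewrite -ge0_integralZl_EFin //.
- by under [RHS]eq_integral do rewrite -EFinM mulrA.
- by move=> w _; rewrite lee_fin mulr_ge0.
- by apply/measurable_EFinP; apply: measurable_funM.
Qed.

End integral_comp_weighted.

Section integral_comp_weighted_le.
Local Open Scope ereal_scope.
Context d (T : measurableType d) d' (U : measurableType d') (R : realType).
Variables (P : {measure set T -> \bar R}) (k : {measure set U -> \bar R}).
Variables (Y : T -> U) (rho : T -> R) (C : \bar R).
Hypotheses (mY : measurable_fun setT Y) (mrho : measurable_fun setT rho).
Hypotheses (rho_ge0 : forall w, (0 <= rho w)%R) (C_ge0 : 0 <= C).
Hypothesis indic_le : forall S, measurable S ->
  \int[P]_w (\1_S (Y w) * rho w)%:E <= k S * C.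

Import HBNNSimple.

Let nnsfun_comp_weighted_le (s : {nnsfun U >-> R}) :
  \int[P]_w (s (Y w) * rho w)%:E <= \int[k]_x (s x)%:E * C.
Proof.
have mpre y : measurable (s @^-1` [set y]).
  by rewrite -[_ @^-1` _]setTI; exact: measurable_funP.
have -> : \int[k]_x (s x)%:E = \int[k]_x (s (id x) * cst 1%R x)%:E.
  by apply: eq_integral => x _; rewrite /= mulr1.
rewrite !integral_nnsfun_comp_weighted //.
under [X in _ <= X * C]eq_fsbigr => y _.
  rewrite (eq_integral (fun x => (\1_(s @^-1` [set y]) x)%:E)); last first.
    by move=> x _; rewrite /= mulr1.
  rewrite integral_indic // setIT.
  over.
rewrite ge0_mule_fsuml; last first.
  by move=> y; apply: (mulemu_ge0 (fun y => s @^-1` [set y])); exact: preimage_nnfun0.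
apply: lee_fsum; first exact: fimfunP.
move=> _ [u _ <-]; rewrite -muleA; apply: lee_wpmul2l; first by rewrite lee_fin.
exact: indic_le.
Qed.

Lemma integral_comp_weighted_le (g : U -> R) :
  measurable_fun setT g -> (forall x, 0 <= g x)%R ->
  \int[P]_w (g (Y w) * rho w)%:E <= \int[k]_x (g x)%:E * C.
Proof.
move=> mg g0.
have mEg : measurable_fun setT (EFin \o g) by exact/measurable_EFinP.
have Eg0 x : setT x -> 0 <= (EFin \o g) x by move=> _; rewrite lee_fin.
pose s := nnsfun_approx measurableT mEg.
have s_le_g m x : (s m x <= g x)%R.
  by rewrite -lee_fin /s nnsfun_approxE; exact: le_approx.
have s_nd x : {homo (fun m => s m x) : m n / (m <= n)%N >-> (m <= n)%R}.
  by move=> m n mn; exact/lefP/nd_nnsfun_approx.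
have lim_eq w : (g (Y w) * rho w)%:E = limn (fun m => (s m (Y w) * rho w)%:E).
  apply/esym/cvg_lim => //; under eq_fun do rewrite EFinM.
  by rewrite EFinM; apply: cvgeZr => //; exact: cvg_nnsfun_approx.
under eq_integral do rewrite lim_eq.
apply: (cvge_to_le (@cvg_monotone_convergence _ _ _ P _ measurableT
  (fun m w => (s m (Y w) * rho w)%:E) _ _ _)).
- move=> m; apply/measurable_EFinP; apply: measurable_funM => //.
  by apply: measurableT_comp => //; exact: measurable_funP.
- by move=> m w _; rewrite lee_fin mulr_ge0.
- by move=> w _ m n mn; rewrite lee_fin ler_wpM2r // s_nd.
apply: nearW => m; apply: le_trans (nnsfun_comp_weighted_le (s m)) _.
apply: lee_wpmul2r => //; apply: ge0_le_integral => //.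
- by move=> x _; rewrite lee_fin.
- by apply/measurable_EFinP; exact: measurable_funP.
- by move=> x _; rewrite lee_fin s_le_g.
Qed.

End integral_comp_weighted_le.

Lemma prod_indic_bigcap (I : finType) (T : Type) (R : comNzRingType)
    (A : I -> set T) x :
  \prod_(i : I) \1_(A i) x = \1_(\bigcap_(i in [set: I]) A i) x :> R.
Proof.
rewrite indicE; have [/set_mem Ax|nAx] := boolP (x \in _).
  by rewrite big1 // => i _; rewrite indicE mem_set //; exact: Ax.
have [i nAix] : exists i, ~ A i x.
  apply: contrapT => /forallNP Ax; move/negP: nAx; apply; apply/mem_set => i _.
  by apply: contrapT; exact: Ax.
by rewrite (bigD1 i) //= indicE memNset // mul0r.
Qed.

Lemma measurable_prod_cond d (T : measurableType d) (R : realType) (I : finType)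
    (p : pred I) (h : I -> T -> R) :
  (forall i, measurable_fun setT (h i)) ->
  measurable_fun setT (fun x => \prod_(i | p i) h i x).
Proof.
move=> mh; rewrite (_ : (fun x => _) =
  fun x => \prod_(i <- [seq i <- index_enum I | p i]) h i x).
  by apply: measurable_prod => i _; exact: mh.
by apply/funext => x; rewrite big_filter.
Qed.

Lemma prode_ile1 (R : realDomainType) (I : Type) (s : seq I) (p : pred I) (F : I -> \bar R) :
  (forall i, p i -> 0 <= F i <= 1)%E -> (\prod_(i <- s | p i) F i <= 1)%E.
Proof.
move=> F01; suff /andP[] : (0 <= \prod_(i <- s | p i) F i <= 1)%E by [].
apply: (big_ind (fun x => 0 <= x <= 1)%E) => //; first by rewrite lee01 lexx.
move=> x y /andP[x0 x1] /andP[y0 y1]; rewrite mule_ge0 //=.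
by rewrite -[1%E]mule1; exact: lee_pmul.
Qed.

Lemma markov_ge0 d (T : measurableType d) (R : realType)
    (mu : {measure set T -> \bar R}) (F : T -> R) (c : R) :
  measurable_fun setT F -> (forall w, 0 <= F w) -> 0 < c ->
  (c%:E * mu [set w | (c <= F w)%R] <= \int[mu]_w (F w)%:E)%E.
Proof.
move=> mF F0 c0.
have := le_integral_abse mu measurableT ((measurable_EFinP _ _).2 mF) c0.
have absF w : (`|(EFin \o F) w| = (F w)%:E)%E by rewrite /= ger0_norm.
rewrite setTI; under eq_integral do rewrite absF.
by under eq_set do rewrite absF lee_fin.
Qed.

Section iid_product.
Local Open Scope ereal_scope.
Context d (T : measurableType d) (R : realType).
Variables (P : probability T R) (k : probability R R) (n : nat) (X : 'I_n -> T -> R).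
Hypothesis iidX : iid_with_law P X k.

Let mX : forall i, measurable_fun setT (X i). Proof. by case: iidX. Qed.

Lemma integral_prod_indic_iid (A : 'I_n -> set R) : (forall i, measurable (A i)) ->
  \int[P]_w (\prod_i \1_(A i) (X i w))%:E = \prod_i k (A i).
Proof.
move=> mA; have [_ lawX indepX] := iidX.
have mXA i : measurable (X i @^-1` A i).
  by rewrite -[_ @^-1` _]setTI; exact: mX.
under eq_integral => w _ do rewrite (prod_indic_bigcap R (fun i => X i @^-1` A i) w).
rewrite integral_indic ?setIT //; last first.
  by apply: fin_bigcap_measurable => //; exact: finite_finset.
transitivity (\prod_i P (X i @^-1` A i)); first exact: indepX.
by apply: eq_bigr => i _; exact: lawX.
Qed.

Let prod_le_indic_from (j : nat) := forall (g : 'I_n -> R -> R) (A : 'I_n -> set R),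
  (forall i, measurable (A i)) -> (forall i, measurable_fun setT (g i)) ->
  (forall i x, 0 <= g i x)%R -> (forall i : 'I_n, (j <= i)%N -> g i = \1_(A i)) ->
  \int[P]_w (\prod_i g i (X i w))%:E <= \prod_i \int[k]_x (g i x)%:E.

Let prod_le_indic_from0 : prod_le_indic_from 0.
Proof.
move=> g A mA _ _ gA; under eq_integral do under eq_bigr => i _ do rewrite gA //.
rewrite integral_prod_indic_iid // le_eqVlt; apply/orP; left; apply/eqP.
by apply: eq_bigr => i _; rewrite gA // integral_indic // setIT.
Qed.

Let prod_le_indic_fromS j : prod_le_indic_from j -> prod_le_indic_from j.+1.
Proof.
move=> IH g A mA mg g0 gA; have [jn|nj] := ltnP j n; last first.
  apply: (IH g A) => // i ji; exfalso.
  by move: (ltn_ord i); rewrite ltnNge (leq_trans nj ji).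
pose J := Ordinal jn.
pose rest (F : 'I_n -> R -> R) w := (\prod_(i | i != J) F i (X i w))%R.
pose sub_at (S : set R) i := if i == J then \1_S else g i.
have split_at F w : (\prod_i F i (X i w) = F J (X J w) * rest F w)%R.
  by rewrite (bigD1 J).
have rest_sub S : rest (sub_at S) = rest g.
  by apply/funext => w; apply: eq_bigr => i /negbTE; rewrite /sub_at => ->.
under eq_integral do rewrite split_at.
rewrite (bigD1 J) //=.
apply: (integral_comp_weighted_le (Y := X J) (rho := rest g)) => //.
- apply: (@measurable_prod_cond _ _ _ _ _ (fun i w => g i (X i w))) => i.
  exact: measurableT_comp.
- by move=> w; apply: prodr_ge0 => i _.
- by apply: prode_ge0 => i _; apply: integral_ge0 => x _; rewrite lee_fin.
(* with an indicator in place of the [j]-th factor, this is the hypothesis [IH] *)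
move=> S mS.
pose A_at i := if i == J then S else A i.
have sub_atJ : sub_at S J = \1_S by rewrite /sub_at eqxx.
have sub_at_neq i : i != J -> sub_at S i = g i by rewrite /sub_at => /negbTE ->.
have -> : \int[P]_w (\1_S (X J w) * rest g w)%:E =
    \int[P]_w (\prod_i sub_at S i (X i w))%:E.
  by apply: eq_integral => w _; rewrite split_at rest_sub sub_atJ.
have -> : k S * \prod_(i | i != J) \int[k]_x (g i x)%:E =
    \prod_i \int[k]_x (sub_at S i x)%:E.
  rewrite [RHS](bigD1 J) //= sub_atJ integral_indic // setIT; congr (_ * _).
  by apply: eq_bigr => i /sub_at_neq ->.
apply: (IH _ A_at).
- by move=> i; rewrite /A_at; case: ifP.
- by move=> i; rewrite /sub_at; case: ifP => // _; exact: measurable_indic.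
- by move=> i x; rewrite /sub_at; case: ifP => // _; rewrite indicE.
- move=> i ji; rewrite /sub_at /A_at; case: eqP => // /eqP iJ; apply: gA.
  by rewrite ltn_neqAle ji andbT; apply: contra iJ => /eqP ij; apply/eqP/val_inj.
Qed.

Lemma ge0_integral_prod_iid_le (h : 'I_n -> R -> R) :
  (forall i, measurable_fun setT (h i)) -> (forall i x, 0 <= h i x)%R ->
  \int[P]_w (\prod_i h i (X i w))%:E <= \prod_i \int[k]_x (h i x)%:E.
Proof.
have le_from j : prod_le_indic_from j.
  by elim: j => [|j]; [exact: prod_le_indic_from0 | exact: prod_le_indic_fromS].
move=> mh h0; apply: (le_from n h (fun=> setT)) => // i.
by rewrite leqNgt ltn_ord.
Qed.

End iid_product.

Lemma lee_mean_lneE (R : realType) (n : nat) (y : 'I_n -> R) (u : R) :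
  (0 < n)%N -> (forall i, 0 <= y i) ->
  (u%:E <= (n%:R^-1)%:E * \sum_(i < n) lne (y i)%:E)%E =
  (expR (n%:R * u) <= \prod_(i < n) y i).
Proof.
move=> n_gt0 y_ge0; have n_pos : 0 < n%:R :> R by rewrite ltr0n.
have [y_pos|/existsNP[j /negP]] := pselect (forall i, 0 < y i); last first.
  rewrite lt_neqAle y_ge0 andbT negbK eq_sym => /eqP yj0.
  (* a vanishing factor makes both sides false, as [lne 0 = -oo] *)
  rewrite [\prod_(i < n) _](bigD1 j) //= [\sum_(i < n) _](bigD1 j) //= yj0.
  rewrite mul0r lexx addNye gt0_muleNy ?lte_fin ?invr_gt0 // leeNy_eq /=.
  by apply/esym/negbTE; rewrite -ltNge expR_gt0.
have -> : (\sum_(i < n) lne (y i)%:E = (\sum_(i < n) ln (y i))%:E)%E.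
  by rewrite -sumEFin; apply: eq_bigr => i _; rewrite lne_EFin.
have -> : \prod_(i < n) y i = expR (\sum_(i < n) ln (y i)).
  by rewrite expR_sum; apply: eq_bigr => i _; rewrite lnK // posrE.
by rewrite -EFinM lee_fin ler_expR -(ler_pM2l n_pos) mulrA mulfV ?mul1r // gt_eqF.
Qed.

Definition dual_factor (R : realType) (f : R -> R) (B l1 l2 m y : R) : R :=
  1 - (y - m) * l1 - (B - f `|y|) * l2.

Lemma measurable_comp_normr (R : realType) (f : R -> R) :
  {within `[0, +oo[, continuous f} -> measurable_fun setT (fun x : R => f `|x|).
Proof.
move=> cf; apply: (measurable_comp (measurable_itv `[0, +oo[) _
  (subspace_continuous_measurable_fun _ cf) (@normr_measurable R setT)) => //.
by move=> _ [x _ <-]; rewrite /= in_itv /= andbT.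
Qed.

Lemma measurable_dual_factor (R : realType) (f : R -> R) (B l1 l2 m : R) :
  measurable_fun setT (fun x : R => f `|x|) ->
  measurable_fun setT (dual_factor f B l1 l2 m).
Proof.
move=> mf; rewrite /dual_factor.
apply: measurable_funB; last by apply: measurable_funM => //; exact: measurable_funB.
by apply: measurable_funB => //; apply: measurable_funM => //; exact: measurable_funB.
Qed.

Lemma integral_dual_factor_le1 (R : realType) (f : R -> R) (B l1 l2 : R)
    (k : probability R R) :
  measurable_fun setT (fun x : R => f `|x|) -> (forall x : R, 0 <= f `|x|) ->
  in_L f B k -> 0 <= l2 ->
  (\int[k]_x (dual_factor f B l1 l2 (mean k) x)%:E <= 1)%E.
Proof.
move=> mf f_ge0 [intx intf_le] l2_ge0.
have intf : k.-integrable setT (fun x => (f `|x|)%:E).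
  apply/integrableP; split; first exact/measurable_EFinP.
  under eq_integral do rewrite gee0_abs ?lee_fin //.
  by rewrite (le_lt_trans intf_le) ?ltry.
set m := mean k; pose a := 1 + m * l1 - B * l2.
have mean_m : (\int[k]_x x%:E)%E = m%:E.
  by rewrite /m /mean fineK //; exact: integrable_fin_num intx.
have fin_intf : (\int[k]_x (f `|x|)%:E)%E \is a fin_num by exact: integrable_fin_num.
have dual_lin x : (dual_factor f B l1 l2 m x)%:E =
    (a%:E + (- l1)%:E * x%:E + l2%:E * (f `|x|)%:E)%E.
  by rewrite -!EFinM -!EFinD /a /dual_factor; congr EFin; ring.
under eq_integral do rewrite dual_lin.
have int_a : k.-integrable setT (fun=> a%:E) by exact: finite_measure_integrable_cst.
have int_x : k.-integrable setT (fun x => (- l1)%:E * x%:E)%E by exact: integrableZl.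
have int_f : k.-integrable setT (fun x => l2%:E * (f `|x|)%:E)%E by exact: integrableZl.
rewrite integralD ?integrableD // integralD // integral_cst //.
rewrite [X in (a%:E * X)%E]probability_setT mule1 !integralZl // mean_m.
move: intf_le; rewrite -(fineK fin_intf) -!EFinM -!EFinD !lee_fin /a => intf_le.
have : l2 * fine (\int[k]_x (f `|x|)%:E)%E <= l2 * B by rewrite ler_wpM2l.
lra.
Qed.

Theorem lemma27 (R : realType) (f : R -> R) (B : R) (k : probability R R)
    (l1 l2 u : R) (d : measure_display) (T : measurableType d)
    (P : probability T R) (n : nat) (X : 'I_n -> T -> R) :
  admissible_f f -> 0 < B -> in_L f B k ->
  0 < l1 -> 0 < l2 -> in_R2 f B k l1 l2 -> 0 <= u ->
  (0 < n)%N -> iid_with_law P X k ->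
  (P [set w | (u%:E <= Lemp f B l1 l2 (mean k) (fun i => X i w))%E]
     <= (expR (- (n%:R * u)))%:E)%E.
Proof.
move=> [_ cf f_ge0 _ _] _ inL _ l2_gt0 [_ _ dual_ge0] _ n_gt0 iidX.
pose g := dual_factor f B l1 l2 (mean k).
have mf := measurable_comp_normr cf.
have mg : measurable_fun setT g by exact: measurable_dual_factor.
pose F w := \prod_(i < n) g (X i w).
have mF : measurable_fun setT F.
  by apply: measurable_prod_cond => i; apply: measurableT_comp => //; case: iidX.
have -> : [set w | (u%:E <= Lemp f B l1 l2 (mean k) (fun i => X i w))%E] =
    [set w | expR (n%:R * u) <= F w].
  by apply/seteqP; split => w; rewrite /= lee_mean_lneE.
have EF_le1 : (\int[P]_w (F w)%:E <= 1)%E.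
  apply: le_trans (ge0_integral_prod_iid_le iidX (fun=> mg) (fun=> dual_ge0)) _.
  apply: prode_ile1 => i _; apply/andP; split.
    by apply: integral_ge0 => x _; rewrite lee_fin; exact: dual_ge0.
  apply: integral_dual_factor_le1 => //; last exact: ltW.
  by move=> x; exact: f_ge0.
have F_ge0 w : 0 <= F w by apply: prodr_ge0 => i _; exact: dual_ge0.
have := le_trans (markov_ge0 P mF F_ge0 (expR_gt0 (n%:R * u))) EF_le1.
by rewrite -lee_pdivlMl ?expR_gt0 // mule1 expRN.
Qed.
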